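(* Let $P$ be a finite poset. Then $N_{diag}(S_N(P))=A(P)$.
   Context: For a poset $P$, $x\prec y$ means $x<y$ with no $z$ satisfying $x<z<y$; $\mathrm{Diag}(P)$ is the set of covering pairs $(x,y)$, and $\mathrm{Inc}(P)$ the set of pairs of incomparable elements. Four elements $a,b,c,d$ form an $N$ in $P$ if $b\prec c$, $a\prec c$, $b\prec d$ and $(a,d)\in\mathrm{Inc}(P)$; $(b,c)$ is the diagonal edge of this $N$. $N_{diag}(P)$ is the set of diagonal edges of all $N$'s in $P$. $S_N(P)$ is the poset obtained from $P$ by adding one new (dummy) vertex $u$ on each edge $(b,c)\in N_{diag}(P)$ (so that $b\prec u\prec c$), with the induced order. $A(P)$ is the set of pairs $(b,c)\in\mathrm{Diag}(P)\setminus N_{diag}(P)$ for which there exist $a,d\in P$ with $a<c$, $b<d$, $(a,b),(c,d)\in\mathrm{Inc}(P)$, and either $(a,c)\in N_{diag}(P)$ or $(b,d)\in N_{diag}(P)$. *)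

From mathcomp Require Import all_boot.
Set Implicit Arguments. Unset Strict Implicit. Unset Printing Implicit Defensive.

Section PosetNotions.
Variables (X : Type) (le : X -> X -> Prop).

Definition is_poset : Prop :=
  (forall x, le x x) /\
  (forall x y, le x y -> le y x -> x = y) /\
  (forall x y z, le x y -> le y z -> le x z).

Definition plt (x y : X) : Prop := le x y /\ x <> y.

Definition covers (x y : X) : Prop :=
  plt x y /\ ~ (exists z, plt x z /\ plt z y).

Definition incomp (x y : X) : Prop := ~ le x y /\ ~ le y x.

Definition isN (a b c d : X) : Prop :=
  covers b c /\ covers a c /\ covers b d /\ incomp a d.

Definition Ndiag (b c : X) : Prop := exists a d, isN a b c d.

Definition Aset (b c : X) : Prop :=
  covers b c /\ ~ Ndiag b c /\
  exists a d, plt a c /\ plt b d /\ incomp a b /\ incomp c d /\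
              (Ndiag a c \/ Ndiag b d).

End PosetNotions.

(* S_N(P): the elements of P (inl) plus one dummy vertex (inr) for each
   edge (b,c) ∈ N_diag(P). *)
Definition SN_carrier (T : Type) (le : T -> T -> Prop) : Type :=
  (T + {p : T * T | Ndiag le p.1 p.2})%type.

(* The induced order: the order generated by le together with b < u < c
   for the dummy u on (b,c). *)
Definition SN_le (T : Type) (le : T -> T -> Prop) (x y : SN_carrier le) : Prop :=
  match x, y with
  | inl x', inl y' => le x' y'
  | inl x', inr u => le x' (sval u).1
  | inr u, inl y' => le (sval u).2 y'
  | inr u, inr v => u = v \/ le (sval u).2 (sval v).1
  end.

From mathcomp Require Import all_boot.
From Stdlib Require Import Classical ClassicalEpsilon Wf_nat.
Set Implicit Arguments. Unset Strict Implicit. Unset Printing Implicit Defensive.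

(* An element of S_N(P) occupies an interval [lo, hi] of P: a point of P, or
   the two ends of the subdivided edge, and x <= y in S_N(P) iff x = y or
   hi x <= lo y.  Hence the covers of S_N(P) are the two halves of each
   subdivided edge and the covers of P outside N_diag(P).  A dummy vertex has
   a single upper and a single lower cover, so it is never an end of the
   diagonal of an N, which must have two of each.  An N on an edge (b,c) of P
   consists of a lower cover a of c and an upper cover d of b in P; if neither
   (a,c) nor (b,d) were subdivided it would already be an N of P, and
   subdividing one of them is exactly what makes a and d incomparable.  This
   is A(P), once its witnesses are shrunk to covers, which finiteness allows. *)

Section Covers.
Variables (X : Type) (le : X -> X -> Prop).

Definition Aset_cov (b c : X) : Prop :=
  covers le b c /\ ~ Ndiag le b c /\
  exists a d, covers le a c /\ covers le b d /\ a <> b /\ c <> d /\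
              (Ndiag le a c \/ Ndiag le b d).

Lemma Ndiag_covers b c : Ndiag le b c -> covers le b c.
Proof. by case=> a [d []]. Qed.

Lemma covers_incomp_lower a b c :
  covers le a c -> covers le b c -> a <> b -> incomp le a b.
Proof.
move=> [pac hac] [pbc hbc] nab; split=> hle.
  by apply: hac; exists b.
by apply: hbc; exists a; split=> //; split=> // eba; apply: nab.
Qed.

Lemma covers_incomp_upper b c d :
  covers le b c -> covers le b d -> c <> d -> incomp le c d.
Proof.
move=> [pbc hbc] [pbd hbd] ncd; split=> hle.
  by apply: hbd; exists c; split=> //; split=> // ecd; apply: ncd.
by apply: hbc; exists d; split=> //; split=> // edc; apply: ncd.
Qed.

Lemma isN_neq_lower a b c d : isN le a b c d -> a <> b.
Proof. by move=> [_ [_ [[[hbd _] _] [nad _]]]] eab; apply: nad; rewrite eab. Qed.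

Lemma isN_neq_upper a b c d : isN le a b c d -> c <> d.
Proof. by move=> [_ [[[hac _] _] [_ [nad _]]]] ecd; apply: nad; rewrite -ecd. Qed.

Hypothesis hP : is_poset le.

Lemma poset_refl x : le x x. Proof. by case: hP. Qed.

Lemma poset_anti x y : le x y -> le y x -> x = y.
Proof. by case: hP => _ [+ _]; apply. Qed.

Lemma poset_trans x y z : le x y -> le y z -> le x z.
Proof. by case: hP => _ [_]; apply. Qed.

Lemma plt_nge x y : plt le x y -> ~ le y x.
Proof. by move=> [hxy nxy] hyx; apply: nxy; apply: poset_anti. Qed.

Lemma le_plt_trans x y z : le x y -> plt le y z -> plt le x z.
Proof.
move=> hxy [hyz nyz]; split; first exact: poset_trans hxy hyz.
by move=> exz; apply: nyz; apply: poset_anti hyz _; rewrite -exz.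
Qed.

Lemma plt_le_trans x y z : plt le x y -> le y z -> plt le x z.
Proof.
move=> [hxy nxy] hyz; split; first exact: poset_trans hxy hyz.
by move=> exz; apply: nxy; apply: poset_anti hxy _; rewrite exz.
Qed.

Lemma covers_interval b c x y :
  covers le b c -> le b x -> plt le x y -> le y c -> x = b /\ y = c.
Proof.
move=> [_ hbc] hbx hxy hyc; split; apply: NNPP => ne; apply: hbc.
  exists x; split; first by split=> // ebx; apply: ne.
  exact: plt_le_trans hxy hyc.
exists y; split; first exact: le_plt_trans hbx hxy.
by split=> // eyc; apply: ne.
Qed.

Lemma covers_upper_nle_lower a b c d :
  covers le b c -> covers le a c -> covers le b d -> ~ le d a.
Proof.
move=> [_ hbc] [hac _] [hbd _] hda; apply: hbc.
by exists d; split=> //; apply: le_plt_trans hda hac.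
Qed.

End Covers.

Lemma exists_minimal (X : Type) (R : X -> X -> Prop) (P : X -> Prop) x :
  well_founded R -> P x -> exists m, P m /\ forall z, P z -> ~ R z m.
Proof.
move=> wfR; elim/(well_founded_ind wfR): x => x IH Px.
case: (classic (exists z, P z /\ R z x)) => [[z [Pz Rzx]]|none].
  exact: IH Rzx Pz.
by exists x; split=> // z Pz Rzx; apply: none; exists z.
Qed.

(* The number of predecessors strictly decreases along [R]. *)
Lemma finite_strict_wf (X : finType) (R : X -> X -> Prop) :
  (forall x y z, R x y -> R y z -> R x z) -> (forall x, ~ R x x) ->
  well_founded R.
Proof.
move=> Rtrans Rirr.
pose below x := [pred z | excluded_middle_informative (R z x)].
apply: (@well_founded_lt_compat X (fun x => #|below x|)) => x y Rxy.
apply/ltP/proper_card/properP; split.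
  by apply/subsetP => z /sumboolP Rzx; apply/sumboolP; apply: Rtrans Rzx Rxy.
by exists x; [apply/sumboolP | apply/negP => /sumboolP/Rirr].
Qed.

Section FiniteCovers.
Variables (T : finType) (le : T -> T -> Prop) (hP : is_poset le).

Lemma plt_wf : well_founded (plt le).
Proof.
apply: finite_strict_wf; last by move=> x [].
by move=> x y z hxy /(le_plt_trans hP (proj1 hxy)).
Qed.

Lemma plt_converse_wf : well_founded (fun x y => plt le y x).
Proof.
apply: finite_strict_wf; last by move=> x [].
by move=> x y z hyx hzy; exact: (le_plt_trans hP (proj1 hzy) hyx).
Qed.

Lemma exists_cover_above x y : plt le x y -> exists z, covers le x z /\ le z y.
Proof.
move=> hxy.
have [m [[hxm hmy] minm]] := exists_minimal (P := fun z => plt le x z /\ le z y)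
  plt_wf (conj hxy (poset_refl hP y)).
exists m; split=> //; split=> // -[w [hxw [hwm nwm]]].
by apply: (minm w); split=> //; exact: (poset_trans hP hwm hmy).
Qed.

Lemma exists_cover_below x y : plt le x y -> exists z, le x z /\ covers le z y.
Proof.
move=> hxy.
have [m [[hxm hmy] maxm]] := exists_minimal (P := fun z => le x z /\ plt le z y)
  plt_converse_wf (conj (poset_refl hP x) hxy).
exists m; split=> //; split=> // -[w [[hmw nmw] hwy]].
by apply: (maxm w); split=> //; exact: (poset_trans hP hxm hmw).
Qed.

Lemma Aset_covP b c : Aset le b c <-> Aset_cov le b c.
Proof.
split; last first.
  case=> hbc [nbc [a [d [hac [hbd [nab [ncd hN]]]]]]].
  split=> //; split=> //; exists a, d; split; first by case: hac.
  split; first by case: hbd.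
  split; first exact: covers_incomp_lower hac hbc nab.
  by split=> //; apply: covers_incomp_upper hbc hbd ncd.
case=> hbc [nbc [a [d [pac [pbd [iab [icd [hNac|hNbd]]]]]]]].
  have [d' [hbd' hd'd]] := exists_cover_above pbd.
  split=> //; split=> //; exists a, d'; split; first exact: Ndiag_covers.
  split=> //; split; first by move=> eab; apply: iab.1; rewrite eab; apply: poset_refl.
  by split; [move=> ecd; apply: icd.1; rewrite ecd | left].
have [a' [haa' ha'c]] := exists_cover_below pac.
split=> //; split=> //; exists a', d; split=> //; split; first exact: Ndiag_covers.
split; first by move=> eab; apply: iab.1; rewrite -eab.
by split; [move=> ecd; apply: icd.1; rewrite ecd; apply: poset_refl | right].
Qed.

End FiniteCovers.

Section Subdivision.
Variables (T : Type) (le : T -> T -> Prop) (hP : is_poset le).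

Notation Q := (SN_carrier le).
Notation leQ := (@SN_le T le).

Definition SN_lo (x : Q) : T := match x with inl y => y | inr u => (sval u).1 end.
Definition SN_hi (x : Q) : T := match x with inl y => y | inr u => (sval u).2 end.

Lemma SN_leE x y : leQ x y <-> x = y \/ le (SN_hi x) (SN_lo y).
Proof.
case: x => [x|u]; case: y => [y|v] /=; split=> [|[e|]] //; try by right.
- by case: e => ->; apply: poset_refl.
- by case=> [->|]; [left | right].
- by case: e; left.
Qed.

Lemma SN_ltE x y : plt leQ x y <-> x <> y /\ le (SN_hi x) (SN_lo y).
Proof.
rewrite /plt SN_leE.
by split=> [[[exy|hxy] nxy]|[nxy hxy]]; [case: (nxy exy) | | split; [right|]].
Qed.

Lemma SN_shape z : z = inl (SN_lo z) \/ Ndiag le (SN_lo z) (SN_hi z).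
Proof. by case: z => [a|[[b c] hN]]; [left | right]. Qed.

Lemma SN_pinched z p : le p (SN_lo z) -> le (SN_hi z) p -> z = inl p.
Proof.
move=> hpz hzp; case: (SN_shape z) => [ez|hN].
  by rewrite ez /= in hzp *; congr inl; exact: (poset_anti hP).
have [hz _] := Ndiag_covers hN.
by case: (plt_nge hP hz); exact: (poset_trans hP hzp hpz).
Qed.

Lemma covers_SN_inl b c :
  covers leQ (inl b) (inl c) <-> covers le b c /\ ~ Ndiag le b c.
Proof.
split.
  move=> [/SN_ltE [nbc hbc] hno]; split.
    split; first by split=> // ebc; apply: nbc; rewrite ebc.
    move=> [z [[hbz nbz] [hzc nzc]]]; apply: hno; exists (inl z).
    by split; apply/SN_ltE; split=> //= -[].
  move=> hN; apply: hno; exists (inr (exist _ (b, c) hN)).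
  by split; apply/SN_ltE; split=> //; apply: poset_refl.
move=> [hbc nbc]; have [[lbc neq_bc] hno] := hbc; split.
  by apply/SN_ltE; split=> // -[].
move=> [z [/SN_ltE [nbz hbz] /SN_ltE [nzc hzc]]].
case: (SN_shape z) => [ez|hN].
  rewrite ez /= in nbz nzc hbz hzc; apply: hno; exists (SN_lo z).
  by split; split=> // e; [apply: nbz | apply: nzc]; rewrite e.
have [elo ehi] := covers_interval hP hbc hbz (proj1 (Ndiag_covers hN)) hzc.
by apply: nbc; rewrite -elo -ehi.
Qed.

Lemma covers_SN_from_dummy u y : covers leQ (inr u) y <-> y = inl (sval u).2.
Proof.
split=> [[/SN_ltE [_ huy] hno]|->].
  apply: NNPP => ny; apply: hno; exists (inl (sval u).2).
  by split; apply/SN_ltE; split=> //=; [apply: poset_refl | apply: nesym].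
split; first by apply/SN_ltE; split=> //; apply: poset_refl.
move=> [z [/SN_ltE [_ huz] /SN_ltE [nz hz]]].
by apply: nz; apply: SN_pinched.
Qed.

Lemma covers_SN_to_dummy x u : covers leQ x (inr u) <-> x = inl (sval u).1.
Proof.
split=> [[/SN_ltE [_ hxu] hno]|->].
  apply: NNPP => nx; apply: hno; exists (inl (sval u).1).
  by split; apply/SN_ltE; split=> //=; apply: poset_refl.
split; first by apply/SN_ltE; split=> //; apply: poset_refl.
move=> [z [/SN_ltE [nz hz] /SN_ltE [_ hzu]]].
by apply: nz; rewrite (SN_pinched hz hzu).
Qed.

Lemma lower_cover_SN A c :
  covers leQ A (inl c) -> exists2 a, covers le a c & A = inl a \/ Ndiag le a c.
Proof.
case: A => [a /covers_SN_inl [hac _]|[[a q] hN] /covers_SN_from_dummy [->]].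
  by exists a; [| left].
by exists a; [apply: Ndiag_covers | right].
Qed.

Lemma upper_cover_SN b D :
  covers leQ (inl b) D -> exists2 d, covers le b d & D = inl d \/ Ndiag le b d.
Proof.
case: D => [d /covers_SN_inl [hbd _]|[[p d] hN] /covers_SN_to_dummy [->]].
  by exists d; [| left].
by exists d; [apply: Ndiag_covers | right].
Qed.

Lemma Ndiag_SN_inl x y : Ndiag leQ x y -> exists b c, x = inl b /\ y = inl c.
Proof.
move=> [A [D hN]]; have [hxy [hAy [hxD _]]] := hN.
case: x hN hxy hxD => [b|u] hN hxy hxD; last first.
  move/covers_SN_from_dummy: hxy => ey; move/covers_SN_from_dummy: hxD => eD.
  by case: (isN_neq_upper hN); rewrite ey eD.
case: y hN hxy hAy => [c|u] hN hxy hAy; first by exists b, c.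
move/covers_SN_to_dummy: hxy => eb; move/covers_SN_to_dummy: hAy => eA.
by case: (isN_neq_lower hN); rewrite eA eb.
Qed.

Lemma Ndiag_SN_Aset_cov b c : Ndiag leQ (inl b) (inl c) -> Aset_cov le b c.
Proof.
move=> [A [D hN]]; have [/covers_SN_inl [hbc nbc] [hAc [hbD hAD]]] := hN.
have [a hac sA] := lower_cover_SN hAc; have [d hbd sD] := upper_cover_SN hbD.
split=> //; split=> //; exists a, d; do 2!split=> //; split.
  move=> eab; case: sA => [eA|]; last by rewrite eab.
  by apply: (isN_neq_lower hN); rewrite eA eab.
split.
  move=> ecd; case: sD => [eD|]; last by rewrite -ecd.
  by apply: (isN_neq_upper hN); rewrite eD ecd.
apply: NNPP => /not_or_and [nNa nNd]; apply: nbc; exists a, d.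
case: sA => [eA|//]; case: sD => [eD|//]; rewrite eA eD in hAD.
exact: (conj hbc (conj hac (conj hbd hAD))).
Qed.

Definition lift_lower (a c : T) : Q :=
  match excluded_middle_informative (Ndiag le a c) with
  | left hN => inr (exist _ (a, c) hN)
  | right _ => inl a
  end.

Definition lift_upper (b d : T) : Q :=
  match excluded_middle_informative (Ndiag le b d) with
  | left hN => inr (exist _ (b, d) hN)
  | right _ => inl d
  end.

Lemma covers_lift_lower a c : covers le a c -> covers leQ (lift_lower a c) (inl c).
Proof.
rewrite /lift_lower; case: excluded_middle_informative => hN hac.
  exact/covers_SN_from_dummy.
exact/covers_SN_inl.
Qed.

Lemma covers_lift_upper b d : covers le b d -> covers leQ (inl b) (lift_upper b d).
Proof.
rewrite /lift_upper; case: excluded_middle_informative => hN hbd.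
  exact/covers_SN_to_dummy.
exact/covers_SN_inl.
Qed.

Lemma incomp_lifts a b c d :
  covers le b c -> covers le a c -> covers le b d -> a <> b -> c <> d ->
  Ndiag le a c \/ Ndiag le b d -> incomp leQ (lift_lower a c) (lift_upper b d).
Proof.
move=> hbc hac hbd nab ncd hN.
have [nle_ab _] := covers_incomp_lower hac hbc nab.
have [nle_cd _] := covers_incomp_upper hbc hbd ncd.
have nle_da := covers_upper_nle_lower hP hbc hac hbd.
have nle_cb := plt_nge hP (proj1 hbc).
rewrite /lift_lower /lift_upper.
case: excluded_middle_informative => hNa; case: excluded_middle_informative => hNd //=.
- by split=> -[e|] //; apply: nab; case: e.
- by case: hN.
Qed.

Lemma Aset_cov_Ndiag_SN b c : Aset_cov le b c -> Ndiag leQ (inl b) (inl c).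
Proof.
move=> [hbc [nbc [a [d [hac [hbd [nab [ncd hN]]]]]]]].
exists (lift_lower a c), (lift_upper b d); split; first exact/covers_SN_inl.
split; first exact: covers_lift_lower.
by split; [apply: covers_lift_upper | apply: incomp_lifts].
Qed.

End Subdivision.

Theorem lemma3 (T : finType) (le : T -> T -> Prop) (hP : is_poset le) :
  forall x y : SN_carrier le,
    Ndiag (@SN_le T le) x y <->
    exists b c : T, x = inl b /\ y = inl c /\ Aset le b c.
Proof.
move=> x y; split.
  move=> hN; have [b [c [ex ey]]] := Ndiag_SN_inl hP hN.
  rewrite ex ey in hN; exists b, c; split=> //; split=> //.
  exact/(Aset_covP hP)/(Ndiag_SN_Aset_cov hP).
move=> [b [c [-> [-> /(Aset_covP hP) hA]]]].
exact: Aset_cov_Ndiag_SN.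
Qed.
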